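(* Let $\mathcal G=\mathcal G^{(n)}$ be, for each $n$, an $(\alpha,A,\beta,B,\epsilon,\vartheta)$-good $(\Delta_V,\Delta_C)$-regular bipartite graph with $n$ variable nodes and $n(1-R)$ check nodes, and let $H$ be the random parity-check matrix of the $(\mathcal G,\lambda)$ LDA ensemble. If $B>2+(1+\delta)/\lambda$ for some $\delta>0$, then \[ \Pr[H\text{ is not full-rank}]\le n^{-(2\lambda+\delta)}(1+o(1)), \] where $o(1)\to0$ as $n\to\infty$.
   Context: $0<R<1$, $\lambda>0$, $\Delta_V/\Delta_C=1-R$. For a vertex set $S$, $N(S)$ is its neighbourhood. $\mathcal G$ is $(\alpha,A,\beta,B,\epsilon,\vartheta)$-good (with $1\le\alpha<A$, $\frac1{1-R}<\beta<\min\{\frac2{1-R},B\}$, $0<\epsilon<(1-R)/A$, $0<\vartheta<1/(B(1-R))$) if: (L1) every set $S$ of variable nodes with $|S|\le\lceil\epsilon n\rceil$ has $|N(S)|\ge A|S|$; (L2) every set $S$ of variable nodes with $|S|\le\lceil n(1-R)/(2\alpha)\rceil$ has $|N(S)|\ge\alpha|S|$; (R1) every set $T$ of check nodes with $|T|\le\vartheta n(1-R)$ has $|N(T)|\ge B|T|$; (R2) every set $T$ of check nodes with $|T|\le n(1-R)/2$ has $|N(T)|\ge\beta|T|$. The ensemble: $p$ is the smallest prime $\ge n^\lambda$; $\widehat H$ is the $n(1-R)\times n$ $0/1$ biadjacency matrix of $\mathcal G$ (rows = check nodes); $H$ has entries $h_{i,j}=\widehat h_{i,j}h'_{i,j}$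 with $h'_{i,j}$ i.i.d. uniform on $\mathbb F_p$. Full-rank means rank $n(1-R)$ over $\mathbb F_p$. *)

From HB Require Import structures.
From mathcomp Require Import all_boot all_order all_algebra.
From mathcomp Require Import all_classical all_reals all_analysis.
Set Implicit Arguments. Unset Strict Implicit. Unset Printing Implicit Defensive.
Import Order.TTheory GRing.Theory Num.Theory.
Local Open Scope ring_scope.

(* A bipartite graph with m check nodes (rows) and n variable nodes (columns)
   is given by its 0/1 biadjacency matrix Hhat : 'M[bool]_(m, n). *)

Definition NV (m n : nat) (Hhat : 'M[bool]_(m, n)) (S : {set 'I_n}) : {set 'I_m} :=
  [set i | [exists j in S, Hhat i j]].

Definition NC (m n : nat) (Hhat : 'M[bool]_(m, n)) (T : {set 'I_m}) : {set 'I_n} :=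
  [set j | [exists i in T, Hhat i j]].

Definition regular (m n : nat) (Hhat : 'M[bool]_(m, n)) (dV dC : nat) : Prop :=
  (forall j : 'I_n, #|[set i | Hhat i j]| = dV) /\
  (forall i : 'I_m, #|[set j | Hhat i j]| = dC).

(* (alpha, A, beta, B, eps, theta)-good, with rate Rt (so 1 - Rt = dV/dC) *)
Definition good {K : realType} (Rt : K) (m n : nat) (Hhat : 'M[bool]_(m, n))
    (alpha A beta B eps theta : K) : Prop :=
  [/\ (1 <= alpha) /\ (alpha < A),
      (1 / (1 - Rt) < beta) /\ (beta < Num.min (2 / (1 - Rt)) B),
      (0 < eps) /\ (eps < (1 - Rt) / A),
      (0 < theta) /\ (theta < 1 / (B * (1 - Rt))) &
  [/\
      (forall S : {set 'I_n}, (#|S|%:Z <= Num.ceil (eps * n%:R))%R ->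
          A * #|S|%:R <= #|NV Hhat S|%:R),
      (forall S : {set 'I_n},
          (#|S|%:Z <= Num.ceil (n%:R * (1 - Rt) / (2 * alpha)))%R ->
          alpha * #|S|%:R <= #|NV Hhat S|%:R),
      (forall T : {set 'I_m}, #|T|%:R <= theta * n%:R * (1 - Rt) ->
          B * #|T|%:R <= #|NC Hhat T|%:R) &
      (forall T : {set 'I_m}, #|T|%:R <= n%:R * (1 - Rt) / 2 ->
          beta * #|T|%:R <= #|NC Hhat T|%:R)]].

Lemma exists_prime_ge (k : nat) : exists p, prime p && (k <= p)%N.
Proof.
case: (prime_above k) => p kp pp; exists p; rewrite pp /=; exact: ltnW.
Qed.

Definition lda_prime {K : realType} (n : nat) (lam : K) : nat :=
  ex_minn (exists_prime_ge `|Num.ceil ((n%:R : K) `^ lam)|%N).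

Definition lda_matrix (p m n : nat) (Hhat : 'M[bool]_(m, n)) (H' : 'M['F_p]_(m, n))
  : 'M['F_p]_(m, n) :=
  \matrix_(i, j) ((Hhat i j : nat)%:R * H' i j).

(* Pr over H' with i.i.d. uniform entries on F_p (i.e. H' uniform on all
   m x n matrices over F_p) that H has rank < m over F_p *)
Definition prob_not_full_rank {K : realType} (lam : K) (m n : nat)
    (Hhat : 'M[bool]_(m, n)) : K :=
  let p := lda_prime n lam in
  (#|[set H' : 'M['F_p]_(m, n) | \rank (lda_matrix Hhat H') != m]|%:R /
   #|{: 'M['F_p]_(m, n)}|%:R).

(* [H] is rank deficient iff [y *m H = 0] for some row [y != 0].  For a fixed
   [y] with support [T], every column adjacent to [T] carries independent
   uniform entries meeting a nonzero coefficient of [y], so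
   [Pr[y *m H = 0] <= p ^- |N(T)|]; as the [p - 1] nonzero multiples of [y]
   are witnesses as well, [Pr[rank H < m] <= (p - 1)^-1 \sum_(y != 0) p ^- |N(supp y)|].
   The expansion of a good graph gives [|N(T)| >= B |T|] or
   [|N(T)| >= |T| + c n], which bounds the sum by
   [(1 + (p - 1) p^-B)^m - 1 + p^-(c n) 2^m = O(n^(1 - lam B)) + 2^n n^-(lam c n)];
   since [lam B > 2 lam + 1 + delta] this is [o(n^-(2 lam + delta))]. *)

From HB Require Import structures.
From mathcomp Require Import all_boot all_order all_algebra.
From mathcomp Require Import all_classical all_reals all_analysis.
From mathcomp Require Import ring lra zify.
Import Order.TTheory GRing.Theory Num.Theory numFieldNormedType.Exports.
Set Implicit Arguments. Unset Strict Implicit. Unset Printing Implicit Defensive.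
Local Open Scope ring_scope.

Section LDAKernel.
Variables (F : finFieldType) (m n : nat) (Hh : 'M[bool]_(m, n)).

(* [lda_matrix] over an arbitrary finite field; over ['F_p] the two agree by
   conversion. *)
Definition lda_mx (X : 'M[F]_(m, n)) : 'M[F]_(m, n) :=
  \matrix_(i, j) ((Hh i j : nat)%:R * X i j).

Lemma lda_mxD X Y : lda_mx (X + Y) = lda_mx X + lda_mx Y.
Proof. by apply/matrixP => i j; rewrite !mxE mulrDr. Qed.

Definition rsupp (y : 'rV[F]_m) : {set 'I_m} := [set i | y 0 i != 0].

Definition lda_annihilated (y : 'rV[F]_m) : {set 'M[F]_(m, n)} :=
  [set X | y *m lda_mx X == 0].

Definition spread_mx (T : {set 'I_m}) (f : {ffun 'I_n -> F}) : 'M[F]_(m, n) :=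
  \matrix_(i, j) (if [pick k in T | Hh k j] == Some i then f j else 0).

Lemma mul_spread_mx y f j :
  (y *m lda_mx (spread_mx (rsupp y) f)) 0 j =
  if [pick k in rsupp y | Hh k j] is Some k then y 0 k * f j else 0.
Proof.
rewrite !mxE; under eq_bigr => i _ do rewrite !mxE.
case: pickP => [k /andP[_ hk]|_]; last by apply: big1 => i _; rewrite !mulr0.
rewrite (bigD1 k) //= eqxx hk mul1r big1 ?addr0 // => i ik.
by case: eqP => [[ki]|_]; [rewrite ki eqxx in ik | rewrite !mulr0].
Qed.

(* [(X, f) |-> X + spread_mx (rsupp y) f] is injective on annihilated [X] and
   [f] supported on [NC Hh (rsupp y)]: column [j] of [y *m lda_mx _] recovers
   [f j] up to the nonzero factor [y 0 k]. *)
Lemma card_lda_annihilated y :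
  (#|lda_annihilated y| * #|F| ^ #|NC Hh (rsupp y)| <= #|F| ^ (m * n))%N.
Proof.
set T := rsupp y.
pose P := [set f : {ffun 'I_n -> F} | f \in pffun_on (0 : F) (NC Hh T) predT].
have cardP : #|P| = (#|F| ^ #|NC Hh T|)%N.
  by rewrite cardsE card_pffun_on cardT cardE.
rewrite -cardP -cardsX -card_mx.
pose shift (u : 'M[F]_(m, n) * {ffun 'I_n -> F}) := u.1 + spread_mx T u.2.
rewrite -(card_in_imset (f := shift)); first exact: max_card.
move=> [X f] [X' f'] /setXP[/= EX Pf] /setXP[/= EX' Pf'] /= eq_shift.
suff eq_f : f = f' by move: eq_shift; rewrite /shift /= eq_f => /addIr ->.
apply/ffunP => j.
have := congr1 (fun M => (y *m lda_mx M) 0 j) eq_shift.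
move: EX EX'; rewrite !inE => /eqP EX /eqP EX'.
rewrite /= !lda_mxD !mulmxDr EX EX' !add0r !mul_spread_mx.
case: pickP => [k /andP[kT _]|none _]; first by apply: mulfI; rewrite inE in kT.
have jN : j \notin NC Hh T.
  by rewrite inE; apply/existsP => -[i /andP[iT hij]]; have := none i; rewrite /= iT hij.
move: Pf Pf'; rewrite !inE => /pffun_onP[sf _] /pffun_onP[sf' _].
have zero_off (g : {ffun 'I_n -> F}) : {subset 0.-support g <= NC Hh T} -> g j = 0.
  by move=> sg; apply/eqP; apply: contraNT jN => gj; apply: sg; rewrite inE.
by rewrite !zero_off //; apply/fintype.subsetP.
Qed.

Definition rank_deficient : {set 'M[F]_(m, n)} :=
  [set X | \rank (lda_mx X) != m].

Lemma rank_deficient_kernel X : X \in rank_deficient ->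
  (#|F|.-1 <= #|[set y : 'rV[F]_m | (y != 0%R) && (X \in lda_annihilated y)]|)%N.
Proof.
rewrite inE => rk.
have [v /andP[/eqP v0 vn]] : exists v : 'rV[F]_m, (v *m lda_mx X == 0) && (v != 0).
  apply/existsP; apply: contraR rk => /existsPn hv.
  suff : row_free (lda_mx X) by [].
  apply: inj_row_free => w /eqP w0; apply/eqP.
  by have := hv w; rewrite w0 /= negbK.
rewrite -(cardsC1 (0 : F)) -(card_in_imset (f := fun c : F => c *: v)); last first.
  move=> a b _ _ /= /eqP; rewrite -subr_eq0 -scalerBl scaler_eq0 (negbTE vn) orbF.
  by rewrite subr_eq0 => /eqP.
apply: subset_leq_card; apply/fintype.subsetP => _ /imsetP[c cn ->].
rewrite !inE in cn *; rewrite scaler_eq0 negb_or vn cn /=.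
by rewrite -scalemxAl v0 scaler0.
Qed.

Lemma card_rank_deficient :
  (#|F|.-1 * #|rank_deficient| <= \sum_(y : 'rV[F]_m | y != 0%R) #|lda_annihilated y|)%N.
Proof.
have -> : (\sum_(y : 'rV[F]_m | y != 0%R) #|lda_annihilated y| =
   \sum_(X : 'M[F]_(m, n)) #|[set y : 'rV[F]_m | (y != 0%R) && (X \in lda_annihilated y)]|)%N.
  under eq_bigr => y _ do rewrite -sum1_card big_mkcond /=.
  rewrite exchange_big /=; apply: eq_bigr => X _.
  rewrite -sum1_card [RHS]big_mkcond [LHS]big_mkcond /=.
  by apply: eq_bigr => y _; rewrite !inE; case: (y != 0).
rewrite mulnC -sum_nat_const (bigID (mem rank_deficient) predT) /=.
by apply: leq_trans (leq_addr _ _); apply: leq_sum => X; apply: rank_deficient_kernel.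
Qed.

End LDAKernel.

Lemma sum_row_prod (T : finType) (R : comPzSemiRingType) (m : nat) (g : T -> R) :
  \sum_(y : 'rV[T]_m) \prod_(i < m) g (y 0 i) = (\sum_a g a) ^+ m.
Proof.
rewrite -[in RHS](card_ord m) -prodr_const bigA_distr_bigA /=.
rewrite (reindex (fun f : {ffun 'I_m -> T} => \row_i f i)) /=; last first.
  exists (fun y : 'rV[T]_m => [ffun i => y 0 i]) => f _.
    by apply/ffunP => i; rewrite ffunE mxE.
  by apply/rowP => i; rewrite !mxE ffunE.
by apply: eq_bigr => f _; apply: eq_bigr => i _; rewrite mxE.
Qed.

Section SupportSums.
Variables (F : finFieldType) (R : comPzRingType) (m : nat).

Lemma sum_expr_rsupp (w : R) :
  \sum_(y : 'rV[F]_m) w ^+ #|rsupp y| = (1 + w *+ #|F|.-1) ^+ m.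
Proof.
have -> : 1 + w *+ #|F|.-1 = \sum_(a : F) (if a == 0 then 1 else w).
  rewrite (bigD1 (0 : F)) //= eqxx -(cardsC1 (0 : F)) -sumr_const.
  by congr (_ + _); apply: eq_big => a; rewrite !inE // => /negbTE ->.
rewrite -sum_row_prod; apply: eq_bigr => y _.
rewrite -prodr_const [RHS](bigID (fun i => y 0 i == 0)) /=.
rewrite [X in _ = X * _]big1 ?mul1r => [|i /eqP ->]; last by rewrite eqxx.
by apply: eq_big => i; rewrite inE // => /negbTE ->.
Qed.

Lemma sum_expr_rsupp_neq0 (w : R) :
  \sum_(y : 'rV[F]_m | y != 0) w ^+ #|rsupp y| = (1 + w *+ #|F|.-1) ^+ m - 1.
Proof.
rewrite -sum_expr_rsupp [in RHS](bigD1 0) //=.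
suff -> : rsupp (0 : 'rV[F]_m) = finset.set0 by rewrite cards0 addrC addrK.
by apply/setP => i; rewrite !inE mxE eqxx.
Qed.

End SupportSums.

Section RankDeficientRatio.
Variables (F : finFieldType) (R : numFieldType) (m n : nat) (Hh : 'M[bool]_(m, n)).
Let q := #|F|.

Lemma rank_deficient_ratio_le (w K : R) : 0 <= w -> 0 <= K ->
  (forall y : 'rV[F]_m, y != 0 ->
     q%:R^-1 ^+ #|NC Hh (rsupp y)| <= w ^+ #|rsupp y| + K * q%:R^-1 ^+ #|rsupp y|) ->
  #|rank_deficient F Hh|%:R / (q ^ (m * n))%:R <=
  q.-1%:R^-1 * ((1 + w *+ q.-1) ^+ m - 1 + K * (1 + q%:R^-1 *+ q.-1) ^+ m).
Proof.
move=> w0 K0 split_y.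
have q_gt1 : (1 < q)%N by apply: card_finNzRing_gt1.
have q_gt0 : (0 : R) < q%:R by rewrite ltr0n ltnW.
have q1_gt0 : (0 : R) < q.-1%:R by rewrite ltr0n -ltnS prednK // ltnW.
have Q_gt0 : (0 : R) < (q ^ (m * n))%:R by rewrite ltr0n expn_gt0 ltnW.
have annihilated_le (y : 'rV[F]_m) :
    (#|lda_annihilated Hh y|%:R : R) <= (q ^ (m * n))%:R * q%:R^-1 ^+ #|NC Hh (rsupp y)|.
  rewrite exprVn ler_pdivlMr ?exprn_gt0 // -natrX -natrM ler_nat.
  exact: card_lda_annihilated.
have sum_le : \sum_(y : 'rV[F]_m | y != 0) q%:R^-1 ^+ #|NC Hh (rsupp y)| <=
    (1 + w *+ q.-1) ^+ m - 1 + K * (1 + q%:R^-1 *+ q.-1) ^+ m.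
  apply: le_trans (ler_sum _ split_y) _.
  rewrite big_split /= sum_expr_rsupp_neq0 lerD2l -mulr_sumr ler_wpM2l //.
  by rewrite -sum_expr_rsupp [leRHS](bigD1 0) //= lerDr exprn_ge0.
rewrite ler_pdivrMr // -(ler_pM2l q1_gt0) !mulrA mulfV ?gt_eqF // mul1r [leRHS]mulrC.
apply: le_trans (_ : (\sum_(y : 'rV[F]_m | y != 0) #|lda_annihilated Hh y|)%:R <= _).
  by rewrite -natrM ler_nat; exact: card_rank_deficient.
rewrite natr_sum; apply: le_trans (ler_sum _ (fun y _ => annihilated_le y)) _.
by rewrite -mulr_sumr ler_wpM2l // ltW.
Qed.

End RankDeficientRatio.

Lemma expr1D_sub1_le (R : realFieldType) (z : R) (m : nat) : 0 <= z ->
  2 * m%:R * z <= 1 -> (1 + z) ^+ m - 1 <= 2 * m%:R * z.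
Proof.
move=> z0; elim: m => [|k IH] h; first by rewrite expr0 subrr mulr0 mul0r.
have h' : 2 * k%:R * z <= 1.
  by apply: le_trans h; rewrite ler_wpM2r // ler_wpM2l // ler_nat.
have := IH h'; rewrite -natr1 in h *; rewrite exprS => hk.
have : (1 + z) * ((1 + z) ^+ k - 1) <= (1 + z) * (2 * k%:R * z) by rewrite ler_wpM2l //; lra.
nra.
Qed.

Lemma ratio_bound_le (R : realFieldType) (q m : nat) (w K : R) :
  (1 < q)%N -> 0 <= w -> 0 <= K -> 2 * m%:R * (w *+ q.-1) <= 1 ->
  q.-1%:R^-1 * ((1 + w *+ q.-1) ^+ m - 1 + K * (1 + q%:R^-1 *+ q.-1) ^+ m) <=
  2 * m%:R * w + K * 2 ^+ m.
Proof.
move=> q_gt1 w0 K0 small.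
have q1_ge1 : (1 : R) <= q.-1%:R by rewrite ler1n -ltnS prednK // ltnW.
have q1_gt0 : (0 : R) < q.-1%:R by lra.
have q_eq : (q%:R : R) = q.-1%:R + 1 by rewrite natr1 prednK // ltnW.
rewrite mulrDr; apply: lerD.
  rewrite ler_pdivrMl //.
  have -> : q.-1%:R * (2 * m%:R * w) = 2 * m%:R * (w *+ q.-1) by rewrite -mulr_natr; ring.
  exact: expr1D_sub1_le (mulrn_wge0 _ w0) small.
apply: le_trans (_ : K * (1 + q%:R^-1 *+ q.-1) ^+ m <= _).
  by apply: ler_piMl; rewrite ?mulr_ge0 ?exprn_ge0 ?addr_ge0 ?mulrn_wge0 ?invr_ge0 // invf_le1.
rewrite ler_wpM2l // lerXn2r ?nnegrE //.
have le1 : (q.-1%:R + 1)^-1 * q.-1%:R <= 1 :> R by rewrite ler_pdivrMl ?mulr1; lra.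
by rewrite -mulr_natr q_eq; lra.
Qed.

Lemma exists_subset_card (T : finType) (A : {set T}) (k : nat) :
  (k <= #|A|)%N -> exists2 B : {set T}, B \subset A & #|B| = k.
Proof.
case/card_geqP => s [uniq_s size_s sub_s]; exists [set x in s].
  by apply/fintype.subsetP => x; rewrite inE => /sub_s.
by rewrite cardsE -size_s; apply/card_uniqP.
Qed.

Section Neighbourhoods.
Variables (m n : nat) (Hh : 'M[bool]_(m, n)).

Lemma NV_subset (S1 S2 : {set 'I_n}) : S1 \subset S2 -> NV Hh S1 \subset NV Hh S2.
Proof.
move=> /fintype.subsetP sub12; apply/fintype.subsetP => i; rewrite !inE.
by case/existsP => j /andP[jS hij]; apply/existsP; exists j; rewrite sub12.
Qed.

Lemma NV_setC_NC (T : {set 'I_m}) : NV Hh (~: NC Hh T) \subset ~: T.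
Proof.
apply/fintype.subsetP => i; rewrite inE => /existsP[j /andP[]].
rewrite !inE => jN hij; apply: contra jN => iT.
by apply/existsP; exists i; rewrite iT hij.
Qed.

Variables (K : realType) (alpha : K).
Hypothesis alpha_ge1 : 1 <= alpha.
Hypothesis expand : forall S : {set 'I_n},
  #|S|%:Z <= Num.ceil (m%:R / (2 * alpha)) -> alpha * #|S|%:R <= #|NV Hh S|%:R.

(* A set [S] too large for [expand] contains a subset [S'] of size
   [ceil (m / (2 alpha))], whose neighbourhood already has [m / 2] nodes. *)
Lemma card_le_NV (S : {set 'I_n}) :
  #|NV Hh S|%:R < m%:R / 2 :> K -> (#|S| <= #|NV Hh S|)%N.
Proof.
move=> small; set x := m%:R / (2 * alpha).
have alpha_gt0 : 0 < alpha by apply: lt_le_trans alpha_ge1.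
have [fits|too_big] := leP (#|S|%:Z) (Num.ceil x).
  by rewrite -(ler_nat K); apply: le_trans (expand fits); rewrite ler_peMl.
have ceil_x_ge0 : 0 <= Num.ceil x.
  by rewrite -(ceil0 K); apply: le_ceil; rewrite divr_ge0 // mulr_ge0 // ltW.
have [S' subS' cardS'] : exists2 S' : {set 'I_n}, S' \subset S & #|S'| = `|Num.ceil x|%N.
  by apply: exists_subset_card; rewrite -lez_nat gez0_abs // ltW.
have cardS'_ge : x <= #|S'|%:R by rewrite cardS' natr_absz ger0_norm // ceil_ge.
have half_le : m%:R / 2 <= alpha * #|S'|%:R.
  have -> : m%:R / 2 = alpha * x by rewrite /x; field; rewrite gt_eqF.
  by rewrite ler_wpM2l // ltW.
have expS' : alpha * #|S'|%:R <= #|NV Hh S'|%:R by apply: expand; rewrite cardS' gez0_abs.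
have : (#|NV Hh S'| <= #|NV Hh S|)%N by rewrite subset_leq_card // NV_subset.
rewrite -(ler_nat K); lra.
Qed.

Lemma card_NC_large (T : {set 'I_m}) :
  m%:R / 2 < #|T|%:R :> K -> (n + #|T| <= #|NC Hh T| + m)%N.
Proof.
move=> large; set S := ~: NC Hh T.
have cardT := cardsC T; have cardS := cardsC (NC Hh T); rewrite !card_ord -/S in cardT cardS.
have NV_le : (#|NV Hh S| <= m - #|T|)%N.
  by have := subset_leq_card (NV_setC_NC T); rewrite -/S; lia.
suff : (#|S| <= #|NV Hh S|)%N by lia.
apply: card_le_NV; apply: le_lt_trans (_ : (m - #|T|)%:R < _); first by rewrite ler_nat.
have Tm : (#|T| <= m)%N by lia.
by rewrite natrB // ltrBlDr {1}(splitr m%:R) ltrD2l.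
Qed.

End Neighbourhoods.

Section GoodGraphs.
Variables (K : realType) (Rt : K) (m n : nat) (Hh : 'M[bool]_(m, n)).
Variables (alpha A beta B eps theta : K).
Hypotheses (Rt_gt0 : 0 < Rt) (Rt_lt1 : Rt < 1).
Hypothesis good_Hh : good Rt Hh alpha A beta B eps theta.

Lemma good_bounds : [/\ 1 <= alpha, 1 < beta, beta < B & 0 < theta].
Proof.
have [[alpha_ge1 _] [beta_gt beta_lt] _ [theta_gt0 _] _] := good_Hh.
split=> //; last by move: beta_lt; rewrite lt_min => /andP[].
by apply: lt_trans beta_gt; rewrite ltr_pdivlMr ?subr_gt0 // mul1r gtrBl.
Qed.

Definition expansion_gap : K := Num.min ((beta - 1) * theta * (1 - Rt)) Rt.

Lemma expansion_gap_gt0 : 0 < expansion_gap.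
Proof.
have [_ beta_gt1 _ theta_gt0] := good_bounds.
by rewrite lt_min Rt_gt0 andbT !mulr_gt0 // subr_gt0.
Qed.

Hypothesis dim_m : m%:R = n%:R * (1 - Rt).

(* Small sets of check nodes expand by [B] (R1); medium ones gain
   [(beta - 1) theta m] neighbours (R2); for large [T] the variable nodes
   outside [NC Hh T] form a small set, whose neighbourhood avoids [T], so (L2)
   gives [|NC Hh T| >= |T| + Rt n]. *)
Lemma good_nbhd_dichotomy (T : {set 'I_m}) :
  B * #|T|%:R <= #|NC Hh T|%:R \/ #|T|%:R + expansion_gap * n%:R <= #|NC Hh T|%:R.
Proof.
have [alpha_ge1 beta_gt1 _ _] := good_bounds.
have [_ _ _ _ [_ L2 R1 R2]] := good_Hh.
have gap_le1 : expansion_gap <= (beta - 1) * theta * (1 - Rt) by rewrite ge_min lexx.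
have gap_le2 : expansion_gap <= Rt by rewrite ge_min lexx orbT.
have [small|not_small] := leP (#|T|%:R) (theta * n%:R * (1 - Rt)); first by left; apply: R1.
right; have [middle|large] := leP (#|T|%:R) (n%:R * (1 - Rt) / 2).
  apply: le_trans (R2 T middle).
  have -> : beta * #|T|%:R = #|T|%:R + (beta - 1) * #|T|%:R by ring.
  rewrite lerD2l; apply: le_trans (_ : (beta - 1) * theta * (1 - Rt) * n%:R <= _).
    by rewrite ler_wpM2r.
  have -> : (beta - 1) * theta * (1 - Rt) * n%:R = (beta - 1) * (theta * n%:R * (1 - Rt)).
    by ring.
  by rewrite ler_wpM2l ?subr_ge0 ?ltW.
rewrite -dim_m in L2 large.
have := card_NC_large alpha_ge1 L2 large; rewrite -(ler_nat K) !natrD dim_m.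
have : expansion_gap * n%:R <= Rt * n%:R by rewrite ler_wpM2r.
lra.
Qed.

End GoodGraphs.

Local Open Scope classical_set_scope.
Local Open Scope ring_scope.

Section RealPowers.
Variable K : realType.

Lemma gt0_powRD (x r s : K) : 0 < x -> x `^ (r + s) = x `^ r * x `^ s.
Proof. by move=> x_gt0; rewrite powRD // (gt_eqF x_gt0) implybT. Qed.

Lemma powRN_le (x y s : K) : 0 < x -> x <= y -> 0 <= s -> y `^ (- s) <= x `^ (- s).
Proof.
move=> x_gt0 xy s_ge0; have y_gt0 := lt_le_trans x_gt0 xy.
rewrite !powRN lef_pV2 ?posrE ?powR_gt0 //.
by apply: ge0_ler_powR; rewrite // nnegrE ltW.
Qed.

Lemma powRN_mulrn_pred_le (p : nat) (B : K) : (0 < p)%N ->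
  (p%:R : K) `^ (- B) *+ p.-1 <= p%:R `^ (1 - B).
Proof.
move=> p_gt0; have p_gt0' : (0 : K) < p%:R by rewrite ltr0n.
apply: le_trans (_ : p%:R `^ (- B) * p%:R <= _).
  by rewrite -mulr_natr ler_wpM2l ?powR_ge0 // ler_nat leq_pred.
by rewrite addrC gt0_powRD // powRr1 // ltW.
Qed.

Lemma exprVn_le_split (P B c : K) (t N : nat) : 1 <= P ->
  B * t%:R <= N%:R \/ t%:R + c <= N%:R ->
  P^-1 ^+ N <= (P `^ (- B)) ^+ t + P `^ (- c) * P^-1 ^+ t.
Proof.
move=> P_ge1 split_N; have P_ge0 : 0 <= P by apply: le_trans P_ge1.
rewrite !exprVn -!powR_invn //; case: split_N => [N_ge|N_ge].
  apply: le_trans (_ : (P `^ (- B)) ^+ t <= _); last by rewrite lerDl mulr_ge0 ?powR_ge0.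
  by rewrite -powR_mulrn ?powR_ge0 // -powRrM mulNr; apply: ler_powR; rewrite // lerN2.
apply: le_trans (_ : P `^ (- c) * P `^ (- t%:R) <= _); last by rewrite lerDr exprn_ge0 // powR_ge0.
rewrite -gt0_powRD ?(lt_le_trans ltr01) //; apply: ler_powR => //; lra.
Qed.

Lemma powR_nat_cvg0 (a : K) : 0 < a -> (n%:R : K) `^ (- a) @[n --> \oo] --> 0.
Proof.
move=> a_gt0; apply/cvgrPdist_le => e e_gt0.
have root_gt0 : 0 < e `^ (- a^-1) by apply: powR_gt0.
near=> n; rewrite sub0r normrN ger0_norm ?powR_ge0 //.
have -> : e = (e `^ (- a^-1)) `^ (- a).
  by rewrite -powRrM mulrNN mulVf ?gt_eqF // powRr1 // ltW.
apply: powRN_le => //; last exact: ltW.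
by near: n; apply: nbhs_infty_ger.
Unshelve. all: end_near. Qed.

Lemma exp2_powR_cvg0 (a k : K) : 0 < a ->
  2 ^+ n * (n%:R : K) `^ (k - a * n%:R) @[n --> \oo] --> 0.
Proof.
move=> a_gt0; have a2_gt0 : 0 < a / 2 by rewrite divr_gt0.
apply: (squeeze_cvgr (f := fun=> 0) (h := fun n => (n%:R : K) `^ (- 1))); last 2 first.
- exact: cvg_cst.
- exact: powR_nat_cvg0.
near=> n.
have n_ge1 : (1 : K) <= n%:R by rewrite ler1n; near: n; exact: nbhs_infty_gt.
have root_le : 2 * (n%:R : K) `^ (- (a / 2)) <= 1.
  rewrite -ler_pdivlMl // mulr1; near: n.
  have half_gt0 : (0 : K) < 2^-1 by rewrite invr_gt0.
  exact: cvgr_le (powR_nat_cvg0 a2_gt0) _ half_gt0.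
have lin_le : k + 1 <= a / 2 * n%:R.
  by rewrite -ler_pdivrMl //; near: n; exact: nbhs_infty_ger.
rewrite mulr_ge0 ?exprn_ge0 ?powR_ge0 //=.
have n_gt0 : (0 : K) < n%:R by apply: lt_le_trans n_ge1.
set x := k + 1 - a / 2 * n%:R.
have x_le0 : x <= 0 by rewrite /x; lra.
have -> : k - a * n%:R = x + (- (a / 2) * n%:R + - 1) by rewrite /x; field.
clearbody x.
rewrite !gt0_powRD // powRrM powR_mulrn ?powR_ge0 //.
set u := n%:R `^ (- (a / 2)); set v := n%:R `^ (- 1).
have -> : 2 ^+ n * (n%:R `^ x * (u ^+ n * v)) = n%:R `^ x * (2 * u) ^+ n * v.
  by rewrite exprMn; ring.
rewrite ler_piMl ?powR_ge0 // mulr_ile1 ?powR_ge0 ?exprn_ge0 ?mulr_ge0 ?powR_ge0 //.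
  by apply: le_trans (ler_powR n_ge1 x_le0) _; rewrite powRr0.
by rewrite exprn_ile1 // mulr_ge0 ?powR_ge0.
Unshelve. all: end_near. Qed.

End RealPowers.

Lemma lda_prime_spec (K : realType) (n : nat) (lam : K) :
  prime (lda_prime n lam) /\ (n%:R : K) `^ lam <= (lda_prime n lam)%:R.
Proof.
rewrite /lda_prime; case: ex_minnP => p /andP[p_prime p_ge] _; split => //.
have ceil_ge0 : 0 <= Num.ceil ((n%:R : K) `^ lam).
  by rewrite ceil_ge0 (lt_le_trans (ltrN10 _)) ?powR_ge0.
apply: le_trans (ceil_ge _) _.
by rewrite -(ger0_norm ceil_ge0) -natr_absz ler_nat.
Qed.

Lemma lda_prime_powRN_le (K : realType) (n : nat) (lam s : K) : (0 < n)%N -> 0 <= s ->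
  (lda_prime n lam)%:R `^ (- s) <= (n%:R : K) `^ (- (lam * s)).
Proof.
move=> n_gt0 s_ge0; have [_ p_ge] := lda_prime_spec n lam.
by rewrite -mulrN powRrM; apply: powRN_le => //; apply: powR_gt0; rewrite ltr0n.
Qed.

Section ProbNotFullRank.
Variables (K : realType) (Rt lam : K) (m n : nat) (Hh : 'M[bool]_(m, n)).
Variables (alpha A beta B eps theta : K).
Hypotheses (Rt_gt0 : 0 < Rt) (Rt_lt1 : Rt < 1).
Hypothesis dim_m : m%:R = n%:R * (1 - Rt).
Hypothesis good_Hh : good Rt Hh alpha A beta B eps theta.

Lemma prob_not_full_rank_le :
  (0 < n)%N -> 2 * (n%:R : K) `^ (1 + lam - lam * B) <= 1 ->
  prob_not_full_rank lam Hh <=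
    2 * n%:R `^ (1 - lam * B) +
    2 ^+ n * n%:R `^ (- (lam * expansion_gap Rt beta theta * n%:R)).
Proof.
move=> n_gt0 n_large.
have [_ beta_gt1 beta_lt_B _] := good_bounds Rt_gt0 Rt_lt1 good_Hh.
have B_gt1 : 1 < B by apply: lt_trans beta_lt_B.
have c_gt0 := expansion_gap_gt0 Rt_gt0 Rt_lt1 good_Hh.
set c := expansion_gap Rt beta theta in c_gt0 *.
have [p_prime _] := lda_prime_spec n lam.
rewrite /prob_not_full_rank; set p := lda_prime n lam in p_prime *.
have p_gt1 : (1 < p)%N by apply: prime_gt1.
have nR_gt0 : (0 : K) < n%:R by rewrite ltr0n.
have m_le_n : (m <= n)%N by rewrite -(ler_nat K) dim_m ler_piMr // gerBl ltW.
set w := (p%:R : K) `^ (- B); set Kc := (p%:R : K) `^ (- (c * n%:R)).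
have B_ge0 : 0 <= B by apply: ltW (lt_trans ltr01 B_gt1).
have w_le : w <= n%:R `^ (- (lam * B)) by exact: lda_prime_powRN_le n_gt0 B_ge0.
have Kc_le : Kc <= n%:R `^ (- (lam * c * n%:R)).
  rewrite -mulrA; apply: lda_prime_powRN_le n_gt0 _.
  by rewrite mulr_ge0 // ltW.
have wp_le : w *+ p.-1 <= n%:R `^ (lam - lam * B).
  apply: le_trans (powRN_mulrn_pred_le _ (ltnW p_gt1)) _.
  have -> : 1 - B = - (B - 1) by ring.
  have -> : lam - lam * B = - (lam * (B - 1)) by ring.
  by apply: lda_prime_powRN_le n_gt0 _; rewrite subr_ge0 ltW.
have := @rank_deficient_ratio_le 'F_p K m n Hh w Kc (powR_ge0 _ _) (powR_ge0 _ _).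
rewrite card_mx !card_Fp // => ratio; apply: le_trans (ratio _) _.
  move=> y _; apply: exprVn_le_split; first by rewrite ler1n ltnW.
  exact: good_nbhd_dichotomy Rt_gt0 Rt_lt1 good_Hh dim_m _.
apply: le_trans (ratio_bound_le p_gt1 (powR_ge0 _ _) (powR_ge0 _ _) _) _.
  apply: le_trans n_large; rewrite -mulrA ler_wpM2l //.
  have -> : 1 + lam - lam * B = 1 + (lam - lam * B) by ring.
  by rewrite gt0_powRD // powRr1 ?(ltW nR_gt0) //; apply: ler_pM; rewrite ?ler_nat ?mulrn_wge0 ?powR_ge0.
apply: lerD.
  rewrite -mulrA ler_wpM2l // gt0_powRD //.
  by rewrite powRr1 ?(ltW nR_gt0) //; apply: ler_pM; rewrite ?ler_nat ?powR_ge0.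
rewrite mulrC; apply: ler_pM; rewrite ?exprn_ge0 ?powR_ge0 //.
by rewrite ler_eXn2l // ltr1n.
Qed.

End ProbNotFullRank.

Lemma prob_not_full_rank_no_checks (K : realType) (lam : K) (m n : nat)
    (Hh : 'M[bool]_(m, n)) :
  m = 0%N -> prob_not_full_rank lam Hh = 0.
Proof.
move=> m0; apply/eqP; rewrite mulf_eq0 pnatr_eq0 cards_eq0; apply/orP; left.
apply/eqP/setP => X; rewrite !inE; apply/negbTE/negPn.
have := rank_leq_row (lda_matrix Hh X).
by move: (\rank _) => r; rewrite m0 leqn0.
Qed.

Section Ensemble.
Variables (K : realType) (Rt lam alpha A beta B eps theta delta : K).
Variables (I : nat -> Prop) (m : nat -> nat) (G : forall n : nat, 'M[bool]_(m n, n)).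
Hypotheses (Rt_gt0 : 0 < Rt) (Rt_lt1 : Rt < 1) (lam_gt0 : 0 < lam) (delta_gt0 : 0 < delta).
Hypothesis B_large : 2 + (1 + delta) / lam < B.
Hypothesis G_good : forall n, I n ->
  (m n)%:R = n%:R * (1 - Rt) /\ good Rt (G n) alpha A beta B eps theta.

Let k := 2 * lam + delta.

Definition scaled_prob (n : nat) : K :=
  if `[< I n >] then prob_not_full_rank lam (G n) * n%:R `^ k else 0.

Lemma prob_not_full_rank_le_scaled n : I n ->
  prob_not_full_rank lam (G n) <= n%:R `^ (- k) * (1 + scaled_prob n).
Proof.
move=> In; have [n0|n_gt0] := posnP n.
  have [dim_m _] := G_good In; rewrite n0 mul0r in dim_m.
  rewrite n0 prob_not_full_rank_no_checks; last by apply/eqP; rewrite -(eqr_nat K) dim_m.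
  by rewrite powR0 ?mul0r // oppr_eq0 gt_eqF // addr_gt0 // mulr_gt0.
rewrite /scaled_prob asboolT // mulrDr mulr1 mulrCA -gt0_powRD ?ltr0n // addNr.
by rewrite powRr0 mulr1 lerDr powR_ge0.
Qed.

Lemma scaled_prob_le n : I n -> (0 < n)%N ->
  2 * (n%:R : K) `^ (1 + lam - lam * B) <= 1 ->
  scaled_prob n <= 2 * n%:R `^ (1 + k - lam * B) +
    2 ^+ n * n%:R `^ (k - lam * expansion_gap Rt beta theta * n%:R).
Proof.
move=> In n_gt0 n_large; have [dim_m good_n] := G_good In.
rewrite /scaled_prob asboolT //.
apply: le_trans (ler_wpM2r (powR_ge0 _ _)
  (prob_not_full_rank_le Rt_gt0 Rt_lt1 dim_m good_n n_gt0 n_large)) _.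
rewrite mulrDl -!mulrA -!gt0_powRD ?ltr0n //.
by rewrite addrAC [- _ + k]addrC.
Qed.

Lemma scaled_prob_cvg0 : scaled_prob n @[n --> \oo] --> 0.
Proof.
have [[n1 In1]|noI] := pselect (exists n, I n); last first.
  rewrite (_ : scaled_prob = fun=> 0); first exact: cvg_cst.
  by apply/funext => n; rewrite /scaled_prob asboolF // => In; apply: noI; exists n.
have [_ good1] := G_good In1.
have c_gt0 := expansion_gap_gt0 Rt_gt0 Rt_lt1 good1.
set c := expansion_gap Rt beta theta in c_gt0 *.
have a_gt0 : 0 < lam * B - 1 - k.
  rewrite -addrA -opprD subr_gt0.
  have -> : 1 + k = lam * (2 + (1 + delta) / lam) by rewrite /k; field; rewrite gt_eqF.
  by rewrite ltr_pM2l.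
have b_gt0 : 0 < lam * B - 1 - lam by move: a_gt0 lam_gt0 delta_gt0; rewrite /k; lra.
have half_gt0 : (0 : K) < 2^-1 by rewrite invr_gt0.
apply: (squeeze_cvgr (f := fun=> 0)
  (h := fun n => 2 * n%:R `^ (1 + k - lam * B) + 2 ^+ n * n%:R `^ (k - lam * c * n%:R)));
  last 2 first.
- exact: cvg_cst.
- have -> : (0 : K) = 2 * 0 + 0 by rewrite mulr0 addr0.
  apply: cvgD; last exact: exp2_powR_cvg0 (mulr_gt0 lam_gt0 c_gt0).
  apply: cvgMl_tmp; rewrite (_ : 1 + k - lam * B = - (lam * B - 1 - k)); last by ring.
  exact: powR_nat_cvg0.
near=> n; apply/andP; split.
  by rewrite /scaled_prob; case: asboolP => // _; rewrite mulr_ge0 ?divr_ge0 ?powR_ge0.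
have [In|nIn] := pselect (I n); last first.
  by rewrite /scaled_prob asboolF // addr_ge0 ?mulr_ge0 ?exprn_ge0 ?powR_ge0.
apply: scaled_prob_le => //; first by near: n; exact: nbhs_infty_gt.
rewrite -ler_pdivlMl // mulr1 (_ : 1 + lam - lam * B = - (lam * B - 1 - lam)); last by ring.
by near: n; exact: cvgr_le (powR_nat_cvg0 b_gt0) _ half_gt0.
Unshelve. all: end_near. Qed.

End Ensemble.

Unset Implicit Arguments.

Theorem lemma4 (K : realType) (Rt lam : K) (dV dC : nat)
    (alpha A beta B eps theta delta : K)
    (I : nat -> Prop) (m : nat -> nat) (G : forall n : nat, 'M[bool]_(m n, n)) :
  0 < Rt -> Rt < 1 -> 0 < lam ->
  dV%:R / dC%:R = 1 - Rt ->
  (forall n, I n ->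
     [/\ (m n)%:R = n%:R * (1 - Rt),
         regular (G n) dV dC &
         good Rt (G n) alpha A beta B eps theta]) ->
  0 < delta -> 2 + (1 + delta) / lam < B ->
  exists o : nat -> K,
    o n @[n --> \oo] --> (0 : K) /\
    forall n, I n ->
      prob_not_full_rank lam (G n) <=
        (n%:R : K) `^ (- (2 * lam + delta)) * (1 + o n).
Proof.
move=> Rt_gt0 Rt_lt1 lam_gt0 _ hG delta_gt0 B_large.
have G_good n : I n -> (m n)%:R = n%:R * (1 - Rt) /\ good Rt (G n) alpha A beta B eps theta.
  by case/hG.
exists (scaled_prob lam delta I G); split.
  exact: scaled_prob_cvg0 Rt_gt0 Rt_lt1 lam_gt0 delta_gt0 B_large G_good.
exact: prob_not_full_rank_le_scaled lam_gt0 delta_gt0 G_good.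
Qed.
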